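(* Let $\iota:\emptyset\to\{\bullet\}$. A continuous map $f:X\to Y$ belongs to $\{\iota\}^{rllrr}$ (in $\mathrm{Top}$) if and only if there is a continuous section $s:Y\to X$ of $f$ such that for every $y\in Y$, $s(y)\in\bigcap\{U: U\subseteq X \text{ open},\ U\cap f^{-1}(y)\neq\emptyset\}$. In particular, each map in $\{\iota\}^{rllrr}$ has a section, is a quotient map, and each of its fibres has a generic point; and the maps $\sigma$, $e$, $M$ described below satisfy $\sigma,e,M\in\{\iota\}^{rllrr}\subseteq\{\iota\}^{rrrrl}$. Here $\sigma:S\to\{\bullet\}$ is the map from the Sierpinski space $S=\{o,c\}$ (open sets $\emptyset,\{o\},S$) to a point; $e:\{a,b\}\to\{\bullet\}$ is the map from the two-point antidiscrete space to a point; and $M:D\to E$ has $D=\{x,y,z,c\}$ with open sets $\emptyset,\{x,y,z\},D$, $E=\{u,v\}$ antidiscrete, $M(x)=M(y)=u$, $M(z)=M(c)=v$.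
   Context: For continuous maps $f:A\to B$, $g:C\to D'$, $f\pitchfork g$ means: for all continuous $t:A\to C$, $b:B\to D'$ with $g\circ t=b\circ f$ there is continuous $d:B\to C$ with $d\circ f=t$, $g\circ d=b$. For a class $P$, $P^l=\{f: f\pitchfork g\ \forall g\in P\}$, $P^r=\{g: f\pitchfork g\ \forall f\in P\}$; for a word $w$ in $l,r$, $P^w$ applies these operations from left to right (e.g. $P^{rllrr}=((((P^r)^l)^l)^r)^r$). A point of a space is generic if it lies in every non-empty open subset. *)

From HB Require Import structures.
From mathcomp Require Import all_boot all_order all_algebra.
From mathcomp Require Import all_classical topology.
Set Implicit Arguments.
Unset Strict Implicit.
Unset Printing Implicit Defensive.
Local Open Scope classical_set_scope.

Record Mor := mkMor {
  mdom : topologicalType;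
  mcod : topologicalType;
  mfun :> mdom -> mcod;
  mcont : continuous mfun }.

Definition orth (f g : Mor) : Prop :=
  forall (t : mdom f -> mdom g) (b : mcod f -> mcod g),
    continuous t -> continuous b -> (g : _ -> _) \o t = b \o f ->
    exists d : mcod f -> mdom g,
      continuous d /\ d \o (f : _ -> _) = t /\ (g : _ -> _) \o d = b.

Definition MorClass := Mor -> Prop.

Definition lorth (P : MorClass) : MorClass := fun f => forall g, P g -> orth f g.
Definition rorth (P : MorClass) : MorClass := fun g => forall f, P f -> orth f g.

Definition antidiscrete (T : choiceType) : Type := T.

Section Antidiscrete.
Variable T : choiceType.
Definition adisc_open (U : set T) : Prop := U = set0 \/ U = setT.
Lemma adisc_openT : adisc_open setT. Proof. by right. Qed.
Lemma adisc_openI : setI_closed adisc_open.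
Proof.
move=> A B [->|->] [->|->]; rewrite ?set0I ?setI0 ?setIT ?setTI;
  by [left|right].
Qed.
Lemma adisc_open_bigU (I : Type) (f : I -> set T) :
  (forall i, adisc_open (f i)) -> adisc_open (\bigcup_i f i).
Proof.
move=> fo; have [[i fiT]|] := pselect (exists i, f i = setT).
  by right; apply/seteqP; split=> // x _; exists i => //; rewrite fiT.
move=> nT; left; apply/seteqP; split=> // x [i _ fxi].
by case: (fo i) => fi; [rewrite fi in fxi|apply: nT; exists i].
Qed.
HB.instance Definition _ := Choice.on (antidiscrete T).
HB.instance Definition _ := @isOpenTopological.Build (antidiscrete T)
  adisc_open adisc_openT adisc_openI adisc_open_bigU.
End Antidiscrete.

Definition emptyS : topologicalType := antidiscrete void.
Definition pointS : topologicalType := antidiscrete unit.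

Definition iota_fun (x : emptyS) : pointS := tt.
Lemma iota_cont : continuous iota_fun. Proof. by case. Qed.
Definition iota : Mor := mkMor iota_cont.

Definition iotaClass : MorClass := fun f => f = iota.

Definition iota_rllrr : MorClass := rorth (rorth (lorth (lorth (rorth iotaClass)))).
Definition iota_rrrrl : MorClass := lorth (rorth (rorth (rorth (rorth iotaClass)))).

Definition sierpinski : Type := bool.
Definition sierp_o : sierpinski := true.
Definition sierp_c : sierpinski := false.
Definition sierp_open (U : set sierpinski) : Prop :=
  U = set0 \/ U = [set sierp_o] \/ U = setT.
Lemma sierp_openT : sierp_open setT. Proof. by right; right. Qed.
Lemma sierp_openI : setI_closed sierp_open.
Proof.
move=> A B [->|[->|->]] [->|[->|->]]; rewrite ?set0I ?setI0 ?setIT ?setTI ?setIid;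
  by [left|right;left|right;right].
Qed.
Lemma sierp_open_bigU (I : Type) (f : I -> set sierpinski) :
  (forall i, sierp_open (f i)) -> sierp_open (\bigcup_i f i).
Proof.
move=> fo; have [[i fiT]|nT] := pselect (exists i, f i = setT).
  by right; right; apply/seteqP; split=> // x _; exists i => //; rewrite fiT.
have [[i fio]|no] := pselect (exists i, f i = [set sierp_o]).
  right; left; apply/seteqP; split.
    move=> x [j _ fjx]; case: (fo j) => [fj|[fj|fj]]; rewrite fj in fjx => //.
    by exfalso; apply: nT; exists j.
  by move=> x ->; exists i => //; rewrite fio.
left; apply/seteqP; split=> // x [j _ fjx].
case: (fo j) => [fj|[fj|fj]]; first by rewrite fj in fjx.
  by exfalso; apply: no; exists j.
by exfalso; apply: nT; exists j.
Qed.
HB.instance Definition _ := Choice.on sierpinski.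
HB.instance Definition _ := @isOpenTopological.Build sierpinski
  sierp_open sierp_openT sierp_openI sierp_open_bigU.

Definition sigma_fun (x : sierpinski) : pointS := tt.
Lemma sigma_cont : continuous sigma_fun.
Proof.
apply/continuousP => A [->|->]; rewrite ?preimage_set0 ?preimage_setT;
  [exact: open0|exact: openT].
Qed.
Definition sigma : Mor := mkMor sigma_cont.

Definition twoAnti : topologicalType := antidiscrete bool.
Definition e_fun (x : twoAnti) : pointS := tt.
Lemma e_cont : continuous e_fun.
Proof.
apply/continuousP => A [->|->]; rewrite ?preimage_set0 ?preimage_setT;
  [exact: open0|exact: openT].
Qed.
Definition e : Mor := mkMor e_cont.

Inductive D4 := Dx | Dy | Dz | Dc.
Definition D4_to_nat (p : D4) : nat :=
  match p with Dx => 0 | Dy => 1 | Dz => 2 | Dc => 3 end.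
Definition nat_to_D4 (n : nat) : option D4 :=
  match n with 0 => Some Dx | 1 => Some Dy | 2 => Some Dz | 3 => Some Dc
  | _ => None end.
Lemma D4_pcan : pcancel D4_to_nat nat_to_D4. Proof. by case. Qed.
HB.instance Definition _ := Countable.copy D4 (pcan_type D4_pcan).

Definition Dspace : Type := D4.
Definition D_open (U : set Dspace) : Prop :=
  U = set0 \/ U = [set p | p <> Dc] \/ U = setT.
Lemma D_openT : D_open setT. Proof. by right; right. Qed.
Lemma D_openI : setI_closed D_open.
Proof.
move=> A B [->|[->|->]] [->|[->|->]]; rewrite ?set0I ?setI0 ?setIT ?setTI ?setIid;
  by [left|right;left|right;right].
Qed.
Lemma D_open_bigU (I : Type) (f : I -> set Dspace) :
  (forall i, D_open (f i)) -> D_open (\bigcup_i f i).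
Proof.
move=> fo; have [[i fiT]|nT] := pselect (exists i, f i = setT).
  by right; right; apply/seteqP; split=> // x _; exists i => //; rewrite fiT.
have [[i fio]|no] := pselect (exists i, f i = [set p | p <> Dc]).
  right; left; apply/seteqP; split.
    move=> x [j _ fjx]; case: (fo j) => [fj|[fj|fj]]; rewrite fj in fjx => //.
    by exfalso; apply: nT; exists j.
  by move=> x xc; exists i => //; rewrite fio.
left; apply/seteqP; split=> // x [j _ fjx].
case: (fo j) => [fj|[fj|fj]]; first by rewrite fj in fjx.
  by exfalso; apply: no; exists j.
by exfalso; apply: nT; exists j.
Qed.
HB.instance Definition _ := Choice.on Dspace.
HB.instance Definition _ := @isOpenTopological.Build Dspace
  D_open D_openT D_openI D_open_bigU.

Definition Espace : topologicalType := antidiscrete bool.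
Definition E_u : Espace := false.
Definition E_v : Espace := true.
Definition M_fun (p : Dspace) : Espace :=
  match p with Dx | Dy => E_u | Dz | Dc => E_v end.
Lemma M_cont : continuous M_fun.
Proof.
apply/continuousP => A [->|->]; rewrite ?preimage_set0 ?preimage_setT;
  [exact: open0|exact: openT].
Qed.
Definition M : Mor := mkMor M_cont.

Definition generic_section {X Y : topologicalType} (f : X -> Y) : Prop :=
  exists s : Y -> X, continuous s /\ (forall y, f (s y) = y) /\
    forall y (U : set X), open U -> U `&` f @^-1` [set y] !=set0 -> U (s y).

Definition has_section {X Y : topologicalType} (f : X -> Y) : Prop :=
  exists s : Y -> X, continuous s /\ forall y, f (s y) = y.

Definition quotient_map {X Y : topologicalType} (f : X -> Y) : Prop :=
  (forall y, exists x, f x = y) /\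
  forall V : set Y, open V <-> open (f @^-1` V).

(** a point p of the subspace A of X is generic in A if it lies in every
    non-empty open subset of A, i.e. in every open U of X meeting A *)
Definition generic_point_of {X : topologicalType} (A : set X) (p : X) : Prop :=
  A p /\ forall U : set X, open U -> U `&` A !=set0 -> U p.

Definition fibres_have_generic_point {X Y : topologicalType} (f : X -> Y) : Prop :=
  forall y, exists p, generic_point_of (f @^-1` [set y]) p.

From Pilot Require Import Defs.
From HB Require Import structures.
From mathcomp Require Import all_boot all_order all_algebra.
From mathcomp Require Import all_classical topology.
Local Open Scope classical_set_scope.
Set Implicit Arguments.
Unset Strict Implicit.
Unset Printing Implicit Defensive.

(* {ι}^r is the class of surjections.  Lifting against the inclusion of a point
   into a two-point discrete space shows that the maps in {ι}^rll are those
   whose image lies in no proper clopen set, and every such map lifts against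
   any h in {ι}^rl, through a retraction of cod h into dom h ⊔ cod h.

   If f has a generic section s and g is in {ι}^rllr, then g has a retraction r
   from the closure of its image, the corestriction being in {ι}^rll.  A square
   (t, b) from g to f is solved by t ∘ r on that closure and by s ∘ b off it;
   genericity of s is exactly what glues the two pieces continuously.

   Conversely, f is tested against the inclusion of X into X ⊔ (I × Y), where
   every copy {i} × Y is clopen, but an open set containing x contains (i, f x)
   for all indices i outside a small set.  By Cantor's theorem, with
   I = P(seq _), a single index i escapes all the small sets attached to the
   pairs (x, U), and y ↦ d(i, y) is a generic section for the lift d.

   Finally, maps in {ι}^rr carry the initial topology, so σ is in {ι}^rrr.  If
   σ ⋔ h, the lift of a square from σ to h identifies its two values; applied
   to the specialization t(s(f x)) ⤳ t x, this makes t ∘ s a lift of any square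
   from f to h, hence f is in {ι}^rrrrl. *)

Lemma open_of_open_nbhs (T : topologicalType) (A : set T) :
  (forall p, A p -> exists2 V, open_nbhs p V & V `<=` A) -> open A.
Proof. by move=> Aloc; rewrite openE => p /Aloc VA; rewrite /interior nbhsE. Qed.

Lemma open_set_cst (T : topologicalType) (P : Prop) : open [set _ : T | P].
Proof.
have [p|np] := pselect P.
  suff -> : [set _ : T | P] = setT by exact: openT.
  by apply/seteqP; split.
suff -> : [set _ : T | P] = set0 by exact: open0.
by apply/seteqP; split=> // x.
Qed.

Lemma set_val_continuous (T : topologicalType) (S : set T) :
  continuous (set_val : S -> T).
Proof. exact: initial_continuous. Qed.

Lemma section_quotient_map (X Y : topologicalType) (f : X -> Y) (s : Y -> X) :
  continuous f -> continuous s -> (forall y, f (s y) = y) -> quotient_map f.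
Proof.
move=> /continuousP fc /continuousP sc fs; split=> [y|V]; first by exists (s y).
split=> [/fc //|/sc].
by rewrite -comp_preimage (_ : f \o s = id) //; apply: funext => y /=.
Qed.

Definition initial_map {A T : topologicalType} (j : A -> T) : Prop :=
  forall U, open U -> exists2 V, open V & j @^-1` V = U.

Lemma initial_map_factor (Z A T : topologicalType) (j : A -> T) (d : Z -> A) :
  initial_map j -> continuous (j \o d) -> continuous d.
Proof.
move=> jinit /continuousP jdc; apply/continuousP => U /jinit [V oV <-].
exact: jdc.
Qed.

Lemma continuous_glue (Z X : topologicalType) (C : set Z) (phi : C -> X)
    (psi : Z -> X) :
  closed C -> continuous phi -> continuous psi ->
  (forall (z : C) (U : set X), open U -> U (phi z) -> U (psi (val z))) ->
  continuous (fun p => if insub p is Some z then phi z else psi p).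
Proof.
move=> Ccl phic psic phi_psi; apply/continuousP => U oU.
have psiU : open (psi @^-1` U) := (continuousP _).1 psic _ oU.
apply: open_of_open_nbhs => p; rewrite /preimage /=.
case: insubP => [z Cp <-|nCp] Udp.
  have [V oV phiU] := (continuousP _).1 phic _ oU.
  exists (psi @^-1` U `&` V).
    split; first exact: openI.
    split; first exact: phi_psi.
    by rewrite -[V _]/((val @^-1` V) z) phiU.
  move=> q [psiUq Vq] /=; case: insubP => // w _ wq.
  by rewrite -[U _]/((phi @^-1` U) w) -phiU /preimage /= set_valE /= wq.
exists (~` C `&` psi @^-1` U).
  by split; [apply: openI; rewrite ?openC|split=> //; move: nCp; rewrite notin_setE].
by move=> q [nCq psiUq] /=; rewrite insubN // notin_setE.
Qed.

(** * Surjections, and the classes {ι}^rl and {ι}^rll *)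

Lemma iota_r_surjective (g : Mor) :
  rorth iotaClass g <-> forall y : mcod g, exists x, g x = y.
Proof.
split=> [gr y|gsurj _ -> t b _ _ _].
  have [|||d [_ [_ /(congr1 (@^~ tt)) gdy]]] :=
    gr Defs.iota erefl (fun v : emptyS => match v with end) (fun _ => y).
  - by case.
  - exact: cst_continuous.
  - by apply: funext; case.
  by exists (d tt).
have [x gx] := gsurj (b tt).
exists (fun _ => x); split; first exact: cst_continuous.
by split; apply: funext => -[].
Qed.

Section DiscreteSum.
Variables (A : topologicalType) (B : choiceType).

(* The coproduct of A with the discrete space on B. *)
Definition dsum : Type := (A + B)%type.
HB.instance Definition _ := Choice.on dsum.

Definition dsum_open (V : set dsum) : Prop := open (@inl A B @^-1` V).
Lemma dsum_openT : dsum_open setT. Proof. exact: openT. Qed.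
Lemma dsum_openI : setI_closed dsum_open. Proof. by move=> U V; exact: openI. Qed.
Lemma dsum_open_bigU (I : Type) (F : I -> set dsum) :
  (forall i, dsum_open (F i)) -> dsum_open (\bigcup_i F i).
Proof.
by move=> Fo; rewrite /dsum_open preimage_bigcup; apply: bigcup_open => i _; exact: Fo.
Qed.
HB.instance Definition _ := @isOpenTopological.Build dsum
  dsum_open dsum_openT dsum_openI dsum_open_bigU.

Lemma dsum_openE (V : set dsum) : open V = open (@inl A B @^-1` V).
Proof. by []. Qed.

Lemma inl_dsum_continuous : continuous (@inl A B : A -> dsum).
Proof. by apply/continuousP. Qed.

Lemma dsum_continuous (Z : topologicalType) (d : dsum -> Z) :
  continuous (d \o inl) -> continuous d.
Proof. by move=> /continuousP dc; apply/continuousP => V /dc. Qed.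

Lemma preimage_inl_image (U : set A) : @inl A B @^-1` (inl @` U) = U.
Proof. by apply/seteqP; split=> [a [_ Ua [<-]]|a Ua] //; exists a. Qed.

Lemma open_image_inl (U : set A) : open U -> open (@inl A B @` U : set dsum).
Proof. by rewrite dsum_openE preimage_inl_image. Qed.

Lemma open_setC_range_inl : open (~` range (@inl A B : A -> dsum)).
Proof.
rewrite dsum_openE (_ : _ @^-1` _ = set0); first exact: open0.
by apply/seteqP; split=> // a /=; apply; exists a.
Qed.

Lemma initial_map_inl : initial_map (@inl A B : A -> dsum).
Proof.
by move=> U oU; exists (inl @` U); [exact: open_image_inl|exact: preimage_inl_image].
Qed.

Lemma inl_dsum_rl : lorth (rorth iotaClass) (mkMor inl_dsum_continuous).
Proof.
move=> G /iota_r_surjective Gsurj t b tc _ Gtb.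
pose sec y := projT1 (cid (Gsurj y)).
have Gsec y : G (sec y) = y := projT2 (cid (Gsurj y)).
exists (fun z : dsum => match z with inl a => t a | inr c => sec (b (inr c)) end).
split; first exact: dsum_continuous.
split=> //; apply: funext => -[a|c] /=; [exact: (congr1 (@^~ a) Gtb)|exact: Gsec].
Qed.

End DiscreteSum.

Definition clopen_dense {X Y : topologicalType} (f : X -> Y) : Prop :=
  forall W : set Y, open W -> open (~` W) -> range f `<=` W -> forall y, W y.

Lemma rll_clopen_dense (f : Mor) :
  lorth (lorth (rorth iotaClass)) f -> clopen_dense f.
Proof.
move=> frll W oW oCW fW y.
pose b q : dsum pointS unit := if `[< W q >] then inl tt else inr tt.
have bW q : W q -> b q = inl tt by move=> Wq; rewrite /b asboolT.
have bCW q : ~ W q -> b q = inr tt by move=> Wq; rewrite /b asboolF.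
have bc : continuous b.
  apply/continuousP => V _; apply: open_of_open_nbhs => q /=.
  have [Wq|Wq] := pselect (W q); [exists W|exists (~` W)] => // q' Wq' /=.
  - by rewrite bW // -(bW q).
  - by rewrite bCW // -(bCW q).
have [|d [_ [_ bd]]] :=
  frll _ (@inl_dsum_rl pointS unit) (fun _ => tt) b (@cst_continuous _ pointS tt) bc.
  by apply: funext => a /=; rewrite bW //; apply: fW; exists a.
apply: contrapT => Wy.
by have := congr1 (@^~ y) bd; rewrite /= bCW.
Qed.

Definition copair_id {A Y : topologicalType} (h : A -> Y) (z : dsum A Y) : Y :=
  match z with inl x => h x | inr y => y end.

Lemma copair_id_continuous (A Y : topologicalType) (h : A -> Y) :
  continuous h -> continuous (copair_id h).
Proof. exact: dsum_continuous. Qed.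

Lemma rl_retraction (h : Mor) : lorth (rorth iotaClass) h ->
  exists r : mcod h -> dsum (mdom h) (mcod h),
    [/\ continuous r, forall x, r (h x) = inl x & forall y, copair_id h (r y) = y].
Proof.
move=> hrl.
have copair_surj : rorth iotaClass (mkMor (copair_id_continuous (@mcont h))).
  by apply/iota_r_surjective => y; exists (inr y).
have [|r [rc [/funeqP rh /funeqP hr]]] :=
  hrl _ copair_surj inl id (@inl_dsum_continuous _ _) (fun y => @cvg_id _ _).
  exact: funext.
by exists r.
Qed.

Lemma clopen_dense_rll (f : Mor) :
  clopen_dense f -> lorth (lorth (rorth iotaClass)) f.
Proof.
move=> fcd h hrl t b tc bc htb.
have {}htb x : h (t x) = b (f x) := congr1 (@^~ x) htb.
have [r [rc rh hr]] := rl_retraction hrl.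
have rbc : continuous (r \o b) by move=> p; exact: continuous_comp (bc p) (rc _).
have rb_inl p : range inl (r (b p)).
  apply: (fcd ((r \o b) @^-1` (range inl : set (dsum _ _)))); [|rewrite preimage_setC|].
  - exact: (continuousP _).1 rbc _ (@open_image_inl (mdom h) (mcod h) _ openT).
  - exact: (continuousP _).1 rbc _ (@open_setC_range_inl (mdom h) (mcod h)).
  - by move=> _ [a _ <-]; rewrite /preimage /= -htb rh; exists (t a).
have {}rb_inl p : exists a, r (b p) = inl a by have [a _ <-] := rb_inl p; exists a.
pose d p := projT1 (cid (rb_inl p)).
have rbd p : r (b p) = inl (d p) := projT2 (cid (rb_inl p)).
have dc : continuous d.
  apply: (initial_map_factor (@initial_map_inl _ (mcod h))).
  by have -> : inl \o d = r \o b by apply: funext => p; rewrite /= rbd.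
exists d; split=> //; split; apply: funext => x /=.
  by apply: (@inl_inj _ (mcod h)); rewrite -rbd -htb rh.
by rewrite -(hr (b x)) rbd.
Qed.

(** * Maps with a generic section are in {ι}^rllrr *)

Section ImageClosure.
Variables (A B : topologicalType) (g : A -> B).

Definition closure_corestr (x : A) : closure (range g) :=
  exist _ (g x) (mem_set (subset_closure (imageT g x))).

Lemma closure_corestr_continuous : continuous g -> continuous closure_corestr.
Proof. by move=> gc; apply: continuous_comp_initial; exact: gc. Qed.

Lemma closure_corestr_clopen_dense : clopen_dense closure_corestr.
Proof.
move=> W _ [V oV VW] gW z; apply: contrapT => nWz.
have Vz : V (val z) by move: nWz; rewrite -[~ _]/((~` W) z) -VW.
have [_ [[c _ <-] Vgc]] := set_mem (valP z) V (open_nbhs_nbhs (conj oV Vz)).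
have : (~` W) (closure_corestr c) by rewrite -VW.
by apply; apply: gW; exists c.
Qed.

End ImageClosure.

Lemma generic_section_rllrr (X Y : topologicalType) (f : X -> Y) (hf : continuous f) :
  generic_section f -> iota_rllrr (mkMor hf).
Proof.
move=> [s [sc [fs sgen]]] g grllr t b tc bc gtb.
have {}gtb x : f (t x) = b (g x) := congr1 (@^~ x) gtb.
pose c := closure_corestr_continuous (@mcont g).
have [|r [rc [rg gr]]] :=
  grllr (mkMor c) (@clopen_dense_rll (mkMor c) (@closure_corestr_clopen_dense _ _ g))
    id set_val (fun x => @cvg_id _ _) (@set_val_continuous _ _).
  exact: funext.
have ftr z : f (t (r z)) = b (val z).
  by rewrite gtb; have /= -> := congr1 (@^~ z) gr; rewrite set_valE.
exists (fun p => if insub p is Some z then t (r z) else s (b p)); split.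
  apply: continuous_glue.
  - exact: closed_closure.
  - by move=> z; apply: continuous_comp (rc z) (tc _).
  - by move=> p; apply: continuous_comp (bc p) (sc _).
  - by move=> z U oU Utrz; apply: sgen oU _; exists (t (r z)); split; rewrite /= ?ftr.
split; apply: funext.
  move=> x /=; have -> : insub (g x) = Some (closure_corestr g x) by exact: insubT.
  by have /= -> := congr1 (@^~ x) rg.
by move=> p /=; case: insubP => [z _ <-|_]; rewrite ?ftr ?fs.
Qed.

(** * Maps in {ι}^rllrr have a generic section *)

Lemma powerset_not_inj (T : Type) (h : set T -> T) : ~ injective h.
Proof.
move=> hinj; pose D := [set x | exists A, h A = x /\ ~ A x].
have [DhD|nDhD] := pselect (D (h D)).
  by have [A [/hinj AD]] := DhD; rewrite AD; apply.
by apply: (nDhD); exists D.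
Qed.

Section CoSmall.
Variable K : Type.

Definition index := set (seq (K + bool)).

Definition small (S : set index) : Prop :=
  exists h : index -> seq (K + bool), forall i j, S i -> S j -> h i = h j -> i = j.

Definition cosmall (S : set index) : Prop := small (~` S).

Lemma cosmallT : cosmall setT.
Proof. by exists (fun _ => [::]) => i j []. Qed.

Lemma cosmallS (S S' : set index) : S `<=` S' -> cosmall S -> cosmall S'.
Proof. by move=> SS' [h hinj]; exists h => i j Si Sj; apply: hinj => /SS'. Qed.

Lemma cosmallI (S S' : set index) : cosmall S -> cosmall S' -> cosmall (S `&` S').
Proof.
move=> [h hinj] [h' h'inj].
exists (fun i => if `[< S i >] then inr false :: h' i else inr true :: h i).
move=> i j nSi nSj; case: (asboolP (S i)) => Si; case: (asboolP (S j)) => Sj;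
  move=> -[] // hij.
- by apply: h'inj => // [S'i|S'j]; [apply: nSi|apply: nSj].
- by apply: hinj => // -[].
Qed.

Lemma cosmall_setC1 (i : index) : cosmall (~` [set i]).
Proof. by rewrite /cosmall setCK; exists (fun _ => [::]) => j k -> ->. Qed.

Lemma cosmall_bigcap (S : K -> set index) :
  (forall k, cosmall (S k)) -> exists i, forall k, S k i.
Proof.
move=> Scosmall; apply: contrapT => noi.
(* Otherwise tagging each index by a k with ~ S k i injects index into seq _. *)
have miss i : exists k, ~ S k i.
  by apply: contrapT => /forallNP Si; apply: noi; exists i => k; apply: contrapT.
pose k i := projT1 (cid (miss i)).
have Sk i : ~ S (k i) i := projT2 (cid (miss i)).
pose h k := projT1 (cid (Scosmall k)).
have hinj k : forall i j, ~ S k i -> ~ S k j -> h k i = h k j -> i = j :=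
  projT2 (cid (Scosmall k)).
apply: (@powerset_not_inj _ (fun i => inl (k i) :: h (k i) i)) => i j [kij hij].
by apply: (hinj (k i)); [apply: Sk|rewrite kij; apply: Sk|rewrite hij kij].
Qed.

End CoSmall.

Section Spread.
Variables (X Y : topologicalType) (f : X -> Y).
Local Notation Ix := (index (X * set X)).

Definition spread : Type := (X + Ix * Y)%type.
HB.instance Definition _ := gen_eqMixin spread.
HB.instance Definition _ := gen_choiceMixin spread.

Definition spread_open (V : set spread) : Prop :=
  [/\ open (inl @^-1` V), forall i, open [set y | V (inr (i, y))] &
      forall x, V (inl x) -> cosmall [set i | V (inr (i, f x))]].

Lemma spread_openT : spread_open setT.
Proof. by split=> [|i|x _]; [exact: openT|exact: openT|exact: cosmallT]. Qed.

Lemma spread_openI : setI_closed spread_open.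
Proof.
move=> U V [U1 U2 U3] [V1 V2 V3]; split=> [|i|x [Ux Vx]].
- exact: openI.
- exact: openI (U2 i) (V2 i).
- exact: cosmallI (U3 _ Ux) (V3 _ Vx).
Qed.

Lemma spread_open_bigU (J : Type) (F : J -> set spread) :
  (forall j, spread_open (F j)) -> spread_open (\bigcup_j F j).
Proof.
move=> Fo; split=> [|i|x [j _ Fjx]].
- by rewrite preimage_bigcup; apply: bigcup_open => j _; have [] := Fo j.
- rewrite (_ : [set y | _] = \bigcup_j [set y | F j (inr (i, y))]) //.
  by apply: bigcup_open => j _; have [] := Fo j.
- have [_ _ /(_ x Fjx)] := Fo j; by apply: cosmallS => i Fji; exists j.
Qed.

HB.instance Definition _ := @isOpenTopological.Build spread
  spread_open spread_openT spread_openI spread_open_bigU.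

Lemma spread_inl_continuous : continuous (@inl X (Ix * Y) : X -> spread).
Proof. by apply/continuousP => V []. Qed.

Definition spread_proj (z : spread) : Y :=
  match z with inl x => f x | inr (_, y) => y end.

Lemma spread_proj_continuous : continuous f -> continuous spread_proj.
Proof.
move=> /continuousP fc; apply/continuousP => W oW; split=> [|//|x Wfx].
- exact: fc.
- exact: cosmallS (fun i _ => Wfx) (cosmallT _).
Qed.

Lemma initial_map_spread_inl : initial_map (@inl X (Ix * Y) : X -> spread).
Proof.
move=> U oU; exists [set z | if z is inl x then U x else True] => //.
by split=> // [i|x Ux]; [exact: openT|exact: cosmallT].
Qed.

Definition spread_off (i : Ix) : set spread :=
  [set z | if z is inr (j, _) then j <> i else True].

Lemma spread_off_clopen (i : Ix) : open (spread_off i) /\ open (~` spread_off i).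
Proof.
split; split=> [|j|x].
- exact: openT.
- exact: open_set_cst.
- by move=> _; exact: cosmall_setC1.
- suff -> : inl @^-1` (~` spread_off i) = set0 by exact: open0.
  by apply/seteqP; split=> x //=; apply.
- exact: (open_set_cst _ (~ j <> i)).
- by move/(_ I).
Qed.

Lemma spread_inl_rllr :
  rorth (lorth (lorth (rorth iotaClass))) (mkMor spread_inl_continuous).
Proof.
move=> g /rll_clopen_dense gcd t b tc bc btg.
have {}btg x : b (g x) = inl (t x) := esym (congr1 (@^~ x) btg).
have b_inl p : exists x, b p = inl x.
  case E: (b p) => [x|[i y]]; first by exists x.
  have [Wo WCo] := spread_off_clopen i.
  suff : spread_off i (b p) by rewrite E.
  apply: (gcd (b @^-1` spread_off i)).
  - exact: (continuousP _).1 bc _ Wo.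
  - by rewrite preimage_setC; exact: (continuousP _).1 bc _ WCo.
  - by move=> _ [x _ <-]; rewrite /preimage /= btg.
pose d p := projT1 (cid (b_inl p)).
have bd p : b p = inl (d p) := projT2 (cid (b_inl p)).
exists d; split.
  apply: (initial_map_factor initial_map_spread_inl).
  by have -> : inl \o d = b by apply: funext => p; rewrite /= bd.
split.
  by apply: funext => x /=; apply: (@inl_inj _ (Ix * Y)); rewrite -bd btg.
by apply: funext => p /=; rewrite bd.
Qed.

Lemma rllrr_generic_section (hf : continuous f) :
  iota_rllrr (mkMor hf) -> generic_section f.
Proof.
move=> frllrr.
have [|d [dc [dinl fd]]] := frllrr _ spread_inl_rllr id spread_proj
  (fun x => @cvg_id _ _) (spread_proj_continuous hf).
  exact: funext.
have {}dinl x : d (inl x) = x := congr1 (@^~ x) dinl.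
have {}fd z : f (d z) = spread_proj z := congr1 (@^~ z) fd.
have dU U : open U -> spread_open (d @^-1` U) := (continuousP d).1 dc U.
have [i0 di0] : exists i, forall k : X * set X,
    open k.2 -> k.2 k.1 -> k.2 (d (inr (i, f k.1))).
  apply: cosmall_bigcap => -[x U] /=.
  have [[oU Ux]|nUx] := pselect (open U /\ U x).
    have [_ _ /(_ x)] := dU U oU.
    by rewrite /preimage /= dinl => /(_ Ux); apply: cosmallS => i Ui _ _.
  by apply: cosmallS (cosmallT _) => i _ oU Ux; case: nUx.
exists (fun y => d (inr (i0, y))); split; [|split].
- by apply/continuousP => U /dU [_ + _]; apply.
- by move=> y; rewrite fd.
- by move=> y U oU [x [Ux /= <-]]; exact: di0 (x, U) oU Ux.
Qed.

End Spread.

(** * The Sierpinski map and {ι}^rrrrl *)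

Lemma rr_initial_map (h : Mor) : rorth (rorth iotaClass) h -> initial_map h.
Proof.
move=> hrr U oU.
pose W := initial_topology (h : mdom h -> mcod h).
have idc : continuous (id : mdom h -> W).
  by apply/continuousP => _ [V oV <-]; exact: (continuousP _).1 (@mcont h) V oV.
have id_surj : rorth iotaClass (mkMor idc).
  by apply/iota_r_surjective => x; exists x.
have [|d [dc [did _]]] :=
  hrr _ id_surj id (h : W -> mcod h) (fun x => @cvg_id _ _) (@initial_continuous _ _ _).
  exact: funext.
have dE : d = id := did; subst d.
have [V oV hVU] : open (U : set W) := (continuousP _).1 dc U oU.
by exists V.
Qed.

Lemma sierpinski_rrr : rorth (rorth (rorth iotaClass)) sigma.
Proof.
move=> h /rr_initial_map hinit t b tc _ _.
have [V oV hVt] :=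
  hinit _ ((continuousP t).1 tc [set sierp_o] (or_intror (or_introl erefl))).
exists (fun q => `[< V q >]); split; last split.
- apply/continuousP => _ [->|[->|->]]; [exact: open0| |exact: openT].
  rewrite (_ : _ @^-1` _ = V) //.
  by apply/seteqP; split=> q; [move/asboolP|move=> /asboolP].
- apply: funext => p /=; have /= -> := congr1 (@^~ p) hVt.
  by case: (t p); [exact: asboolT|exact: asboolF].
- by apply: funext => q /=; case: (b q).
Qed.

Lemma sierpinski_path_continuous (T : topologicalType) (p q : T) :
  (forall U, open U -> U p -> U q) ->
  continuous (fun z : sierpinski => if z then q else p).
Proof.
move=> pq; apply/continuousP => U oU.
have [Up|nUp] := pselect (U p).
  rewrite (_ : _ @^-1` _ = setT); first exact: openT.
  by apply/seteqP; split=> // -[] _ /=; [exact: pq|].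
have [Uq|nUq] := pselect (U q).
  rewrite (_ : _ @^-1` _ = [set sierp_o]); first by right; left.
  by apply/seteqP; split=> -[] //=.
rewrite (_ : _ @^-1` _ = set0); first exact: open0.
by apply/seteqP; split=> -[].
Qed.

Lemma sigma_orth_specialization (h : Mor) (p q : mdom h) :
  orth sigma h -> h p = h q -> (forall U, open U -> U p -> U q) -> p = q.
Proof.
move=> sh hpq pq.
have [|d [_ [dpq _]]] := sh _ (fun _ => h p) (sierpinski_path_continuous pq)
  (@cst_continuous _ _ _).
  by apply: funext => -[] /=.
by move: (congr1 (@^~ sierp_c) dpq) (congr1 (@^~ sierp_o) dpq) => /= <- <-.
Qed.

Lemma generic_section_orth (X Y : topologicalType) (f : X -> Y) (hf : continuous f)
    (h : Mor) :
  generic_section f -> orth sigma h -> orth (mkMor hf) h.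
Proof.
move=> [s [sc [fs sgen]]] sh t b tc bc htb.
have {}htb x : h (t x) = b (f x) := congr1 (@^~ x) htb.
have tsf x : t x = t (s (f x)).
  apply: sigma_orth_specialization sh _ _; first by rewrite !htb fs.
  move=> U oU Utx; apply: sgen ((continuousP t).1 tc U oU) _.
  by exists x.
exists (t \o s); split; first by move=> y; exact: continuous_comp (sc y) (tc _).
split; apply: funext.
  by move=> x /=; rewrite -tsf.
by move=> y /=; rewrite htb fs.
Qed.

Lemma rllrr_rrrrl (g : Mor) : iota_rllrr g -> iota_rrrrl g.
Proof.
case: g => X Y g gc /rllrr_generic_section gsec h hrrrr.
exact: generic_section_orth gsec (hrrrr _ sierpinski_rrr).
Qed.

Lemma generic_section_sigma : generic_section sigma_fun.
Proof.
exists (fun _ => sierp_o); split; first exact: cst_continuous.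
split=> [[]//|y U oU [[] [Ux _]]]; by case: oU Ux => [->|[->|->]].
Qed.

Lemma generic_section_e : generic_section e_fun.
Proof.
exists (fun _ => true : twoAnti); split; first exact: cst_continuous.
split=> [[]//|y U oU [x [Ux _]]]; by case: oU Ux => [->|->].
Qed.

Lemma generic_section_M : generic_section M_fun.
Proof.
exists (fun v : Espace => if v then Dz else Dx); split.
  apply/continuousP => V [->|[->|->]]; [exact: open0| |exact: openT].
  suff -> : (fun v : Espace => if v then Dz else Dx) @^-1` [set p | p <> Dc] = setT.
    exact: openT.
  by apply/seteqP; split=> // -[].
split=> [[]//|y U oU [x [Ux _]]].
by case: oU Ux => [->|[->|->]] //; case: y.
Qed.

Theorem mainTheorem14 :
  (forall (X Y : topologicalType) (f : X -> Y) (hf : continuous f),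
      iota_rllrr (mkMor hf) <-> generic_section f) /\
  (forall (X Y : topologicalType) (f : X -> Y) (hf : continuous f),
      iota_rllrr (mkMor hf) ->
      [/\ has_section f, quotient_map f & fibres_have_generic_point f]) /\
  [/\ iota_rllrr sigma, iota_rllrr e & iota_rllrr M] /\
  (forall g : Mor, iota_rllrr g -> iota_rrrrl g).
Proof.
have rllrrP (X Y : topologicalType) (f : X -> Y) (hf : continuous f) :
    iota_rllrr (mkMor hf) <-> generic_section f.
  by split; [exact: rllrr_generic_section|exact: generic_section_rllrr].
split; first exact: rllrrP.
split.
  move=> X Y f hf /rllrrP [s [sc [fs sgen]]]; split.
  - by exists s.
  - exact: section_quotient_map hf sc fs.
  - by move=> y; exists (s y); split=> // U oU /sgen; apply.
split; last exact: rllrr_rrrrl.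
by split; apply/rllrrP;
  [exact: generic_section_sigma|exact: generic_section_e|exact: generic_section_M].
Qed.
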